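(* Let $A,B\subseteq\mathcal{R}$ be outer measurable with $M_u(B)=0$. Then every subset $C\subseteq B$ is outer measurable with $M_u(C)=0$, and $A\setminus C$ is outer measurable with $M_u(A\setminus C)=M_u(A)$.
   Context: $\mathcal{R}$ denotes the Levi-Civita field: functions $x:\mathbb{Q}\to\mathbb{R}$ with left-finite support, with componentwise addition and formal power series multiplication, ordered by $x>0$ iff $x\ne0$ and $x[\min\operatorname{supp}x]>0$; it is a non-Archimedean ordered field extension of $\mathbb{R}$, Cauchy complete in the order topology, in which all limits and series are taken (a series $\sum a_n$ converges iff $a_n\to0$). An interval is a set $[a,b],[a,b),(a,b]$ or $(a,b)$ with $a<b$ in $\mathcal{R}$, of length $l=b-a$. A cover of $A\subseteq\mathcal{R}$ is a sequence of intervals $(S_n)_{n\ge1}$ with $A\subseteq\bigcup_n S_n$ and $\sum_n l(S_n)$ convergent in $\mathcal{R}$. $A$ is called outer measurable if the infimum $\inf\{\sum_n l(S_n): (S_n)\text{ a cover of }A\}$ exists in $\mathcal{R}$; this infimum is then called the outer measure $M_u(A)$. *)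

(* The Levi-Civita field is built concretely as a type of
   functions rat -> R (Stdlib reals, seen as a realType via Rstruct) with
   left-finite support. *)
From HB Require Import structures.
From mathcomp Require Import all_boot all_order all_algebra.
From mathcomp Require Import boolp classical_sets cardinality Rstruct.

Set Implicit Arguments. Unset Strict Implicit. Unset Printing Implicit Defensive.
Import Order.TTheory GRing.Theory Num.Theory.
Local Open Scope ring_scope.
Local Open Scope classical_set_scope.

Definition left_finite (x : rat -> Rdefinitions.R) : Prop :=
  forall q : rat, finite_set [set a : rat | a < q /\ x a != 0].

Record LC := MkLC { lc_fun :> rat -> Rdefinitions.R ; lc_lf : left_finite lc_fun }.

Lemma left_finite0 : left_finite (fun _ => 0).
Proof.
move=> q; apply: (sub_finite_set _ (finite_set0 rat)) => a /= [_]; by rewrite eqxx.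
Qed.

Lemma left_finiteD (x y : LC) : left_finite (fun q => x q + y q).
Proof.
move=> q.
apply: (@sub_finite_set _ _ ([set a | a < q /\ x a != 0] `|` [set a | a < q /\ y a != 0])).
  move=> a /= [aq]; case: (eqVneq (x a) 0) => [->|xa _]; last by left.
  by rewrite add0r => ya; right.
by rewrite finite_setU; split; apply: lc_lf.
Qed.

Lemma left_finiteN (x : LC) : left_finite (fun q => - x q).
Proof.
move=> q; apply: (sub_finite_set _ (lc_lf x q)) => a /= [aq].
by rewrite oppr_eq0 => ?; split.
Qed.

Definition lc0 : LC := MkLC left_finite0.
Definition lc_add (x y : LC) : LC := MkLC (left_finiteD x y).
Definition lc_opp (x : LC) : LC := MkLC (left_finiteN x).
Definition lc_sub (x y : LC) : LC := lc_add x (lc_opp y).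

(** x > 0 iff x <> 0 and x[min supp x] > 0, i.e. there is q with x q > 0 and
    x a = 0 for all a < q (then q = min supp x). *)
Definition lc_pos (x : LC) : Prop :=
  exists q : rat, 0 < x q /\ forall a : rat, a < q -> x a = 0.

Definition lc_lt (x y : LC) : Prop := lc_pos (lc_sub y x).
Definition lc_le (x y : LC) : Prop := x = y \/ lc_lt x y.

(** convergence in the order topology: every open interval (a,b) containing L
    eventually contains u n *)
Definition lc_cvg (u : nat -> LC) (L : LC) : Prop :=
  forall a b : LC, lc_lt a L -> lc_lt L b ->
    exists N : nat, forall n : nat, (N <= n)%N -> lc_lt a (u n) /\ lc_lt (u n) b.

Fixpoint lc_partial (u : nat -> LC) (n : nat) : LC :=
  match n with 0 => lc0 | m.+1 => lc_add (lc_partial u m) (u m) end.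

Definition lc_series_to (u : nat -> LC) (s : LC) : Prop := lc_cvg (lc_partial u) s.

Inductive ikind := CC | CO | OC | OO.

Definition in_interval (k : ikind) (a b x : LC) : Prop :=
  match k with
  | CC => lc_le a x /\ lc_le x b
  | CO => lc_le a x /\ lc_lt x b
  | OC => lc_lt a x /\ lc_le x b
  | OO => lc_lt a x /\ lc_lt x b
  end.

Definition cover_with_sum (A : set LC) (k : nat -> ikind) (a b : nat -> LC)
    (s : LC) : Prop :=
  (forall n, lc_lt (a n) (b n)) /\
  (forall x, A x -> exists n, in_interval (k n) (a n) (b n) x) /\
  lc_series_to (fun n => lc_sub (b n) (a n)) s.

Definition cover_sums (A : set LC) : set LC :=
  [set s | exists k a b, cover_with_sum A k a b s].

(** m is the infimum of the total lengths of covers of A, i.e. M_u(A) = m *)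
Definition is_outer_measure (A : set LC) (m : LC) : Prop :=
  (forall s, cover_sums A s -> lc_le m s) /\
  (forall l, (forall s, cover_sums A s -> lc_le l s) -> lc_le l m).

Definition outer_measurable (A : set LC) : Prop := exists m, is_outer_measure A m.

From mathcomp Require Import all_boot all_order all_algebra.
From mathcomp Require Import boolp classical_sets cardinality Rstruct.
From mathcomp Require Import ring lra.
Import Order.TTheory GRing.Theory Num.Theory.
Set Implicit Arguments. Unset Strict Implicit.
Local Open Scope ring_scope.
Local Open Scope classical_set_scope.

(* The theorem then follows: a subset C of a null set B is null (covers of B
   cover C, and cover sums are >= 0), and A `\` C has the outer measure of A
   (covers of A cover A `\` C; conversely, a cover of A `\` C with sum s < M(A)
   together with a cover of B of sum < M(A) - s would cover A with sum
   < M(A)). *)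

Notation RR := Rdefinitions.R.

Definition pos_fn (f : rat -> RR) : Prop :=
  exists q : rat, 0 < f q /\ forall a : rat, a < q -> f a = 0.

Definition nneg_fn (f : rat -> RR) : Prop := (forall q, f q = 0) \/ pos_fn f.

Lemma pos_fn_ext (f g : rat -> RR) : (forall q, f q = g q) -> pos_fn f -> pos_fn g.
Proof. by move=> e [q [fq f0]]; exists q; split; rewrite -?e // => a /f0; rewrite e. Qed.

Lemma nneg_fn_ext (f g : rat -> RR) : (forall q, f q = g q) -> nneg_fn f -> nneg_fn g.
Proof. by move=> e [f0|fp]; [left=> q; rewrite -e f0 | right; apply: pos_fn_ext fp]. Qed.

Lemma pos_fnD (f g : rat -> RR) : pos_fn f -> pos_fn g -> pos_fn (fun q => f q + g q).
Proof.
move=> [p [fp f0]] [q [gq g0]].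
case: (ltgtP p q) => [pq|qp|pq].
- exists p; split; first by rewrite (g0 _ pq) addr0.
  by move=> a ap; rewrite f0 // g0 ?addr0 //; exact: lt_trans ap pq.
- exists q; split; first by rewrite (f0 _ qp) add0r.
  by move=> a aq; rewrite f0 ?g0 ?addr0 //; exact: lt_trans aq qp.
- subst q; exists p; split; first exact: addr_gt0.
  by move=> a ap; rewrite f0 // g0 // addr0.
Qed.

Lemma nneg_pos_fnD (f g : rat -> RR) :
  nneg_fn f -> pos_fn g -> pos_fn (fun q => f q + g q).
Proof.
move=> [f0|fp] gp; last exact: pos_fnD.
by apply: pos_fn_ext gp => q; rewrite f0 add0r.
Qed.

Lemma nneg_fnD (f g : rat -> RR) :
  nneg_fn f -> nneg_fn g -> nneg_fn (fun q => f q + g q).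
Proof.
move=> fn [g0|gp]; last by right; exact: nneg_pos_fnD.
by apply: nneg_fn_ext fn => q; rewrite g0 addr0.
Qed.

Lemma pos_fn_oppF (f g : rat -> RR) :
  pos_fn f -> nneg_fn g -> (forall q, g q = - f q) -> False.
Proof.
move=> [p [fp f0]] [g0|[q [gq g0']]] e.
  by move: fp; rewrite -oppr_lt0 -e g0 ltxx.
case: (ltgtP p q) => [pq|qp|pq].
- by move: fp; rewrite -oppr_lt0 -e g0' // ltxx.
- by move: gq; rewrite e f0 // oppr0 ltxx.
- by move: gq; rewrite e -pq; lra.
Qed.

Lemma seq_has_min (s : seq rat) (x : rat) :
  x \in s -> exists2 m, m \in s & forall a, a \in s -> m <= a.
Proof.
have := mem_sort <=%O s; have := sort_sorted (@le_total _ rat) s.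
case: (sort _ s) => [|m t] st mem xs; first by move: xs; rewrite -mem.
exists m => [|a]; first by rewrite -mem inE eqxx.
rewrite -mem inE => /orP [/eqP -> //|a_in_t].
by have /allP := order_path_min (@le_trans _ rat) st; apply.
Qed.

Lemma left_finite_trichotomy (f : rat -> RR) : left_finite f ->
  (forall q, f q = 0) \/ pos_fn f \/ pos_fn (fun q => - f q).
Proof.
move=> lf; have [[q0 fq0]|nz] := pselect (exists q0, f q0 != 0); last first.
  by left=> q; apply/eqP; apply: contrapT => /negP fq; apply: nz; exists q.
have /finite_seqP [s supp] := lf (q0 + 1).
have suppE a : (a < q0 + 1 /\ f a != 0) <-> a \in s.
  by have := congr1 (@^~ a) supp => /= ->.
have [m ms m_min] := seq_has_min (proj1 (suppE q0) (conj (ltrDl _ _) fq0)).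
have [mq fm] := proj2 (suppE m) ms.
have below_m a : a < m -> f a = 0.
  move=> am; apply/eqP; apply: contrapT => /negP fa.
  by have := m_min a (proj1 (suppE a) (conj (lt_trans am mq) fa)); rewrite leNgt am.
right; case: (ltgtP 0 (f m)) => [fm_gt0|fm_lt0|fm0].
- by left; exists m.
- by right; exists m; split; [rewrite oppr_gt0 | move=> a /below_m ->; rewrite oppr0].
- by move: fm; rewrite -fm0 eqxx.
Qed.

Lemma lc_ext (x y : LC) : (forall q, x q = y q) -> x = y.
Proof.
case: x y => f lf [g lg] /= e; have fg : f = g by apply: funext.
by subst g; congr MkLC; exact: Prop_irrelevance.
Qed.

Lemma lc_leE (x y : LC) : lc_le x y <-> nneg_fn (fun q => y q - x q).
Proof.
split=> [[->|xy]|[yx0|yxp]]; [by left=> q; rewrite subrr | by right | | by right].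
by left; apply: lc_ext => q; apply/eqP; rewrite eq_sym -subr_eq0 yx0.
Qed.

Lemma lc_trichotomy (x y : LC) : lc_lt x y \/ x = y \/ lc_lt y x.
Proof.
have [yx0|[xy|yx]] := left_finite_trichotomy (lc_lf (lc_sub y x)).
- by right; left; apply: lc_ext => q; apply/eqP; rewrite eq_sym -subr_eq0; apply/eqP/yx0.
- by left.
- by right; right; apply: pos_fn_ext yx => q /=; rewrite opprD opprK addrC.
Qed.

Lemma lc_lt_leF (x y : LC) : lc_lt x y -> lc_le y x -> False.
Proof. by move=> xy /lc_leE yx; apply: pos_fn_oppF xy yx _ => q /=; ring. Qed.

Lemma lc_leNlt (x y : LC) : ~ lc_lt y x -> lc_le x y.
Proof. by have [xy|[->|yx]] := lc_trichotomy x y; [right|left|]. Qed.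

Lemma partial_sum_mono (u : nat -> LC) : (forall n, lc_pos (u n)) ->
  forall i j, (i <= j)%N -> nneg_fn (fun q => lc_partial u j q - lc_partial u i q).
Proof.
move=> u_pos i j /subnKC <-; elim: (j - i)%N => [|d IH].
  by left=> q; rewrite addn0 subrr.
rewrite addnS; right; apply: pos_fn_ext (nneg_pos_fnD IH (u_pos (i + d)%N)) => q /=.
ring.
Qed.

Lemma cvg_eventually_gt (u : nat -> LC) (L a : LC) : lc_cvg u L -> lc_lt a L ->
  exists N, forall n, (N <= n)%N -> lc_lt a (u n).
Proof.
move=> uL aL; have Lb : lc_lt L (lc_add L (lc_sub L a)).
  by apply: pos_fn_ext aL => q /=; ring.
by have [N uN] := uL _ _ aL Lb; exists N => n /uN [].
Qed.

Lemma partial_sum_le_sum (u : nat -> LC) (s : LC) : (forall n, lc_pos (u n)) ->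
  lc_series_to u s -> forall n, lc_le (lc_partial u n) s.
Proof.
move=> u_pos us n; apply: lc_leNlt => sn.
have ds : lc_lt (lc_sub s (lc_sub (lc_partial u n) s)) s.
  by apply: pos_fn_ext sn => q /=; ring.
have [N uN] := us _ _ ds sn; have [_ Nn] := uN (n + N)%N (leq_addl _ _).
apply: pos_fn_oppF Nn (partial_sum_mono u_pos (leq_addr N n)) _ => q /=; ring.
Qed.

Section Interleaving.
Variables (u v w : nat -> LC).
Hypotheses (u_pos : forall n, lc_pos (u n)) (v_pos : forall n, lc_pos (v n)).
Hypotheses (w_even : forall n, w n.*2 = u n) (w_odd : forall n, w n.*2.+1 = v n).

Lemma interleave_partial n q :
  lc_partial w n.*2 q = lc_partial u n q + lc_partial v n q /\
  lc_partial w n.*2.+1 q = lc_partial u n.+1 q + lc_partial v n q.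
Proof.
elim: n => [|n [IHeven IHodd]]; first by rewrite /= w_even /=; split; ring.
rewrite doubleS /= IHeven w_even w_odd -doubleS w_even /=; split; ring.
Qed.

Variables (s t : LC).
Hypotheses (us : lc_series_to u s) (vt : lc_series_to v t).

Lemma interleave_partial_bounds k : exists2 n, (k <= n.*2.+1)%N &
  lc_le (lc_add (lc_partial u n) (lc_partial v n)) (lc_partial w k) /\
  lc_le (lc_partial w k) (lc_add s t).
Proof.
have us_n m := (lc_leE _ _).1 (partial_sum_le_sum u_pos us m).
have vt_n m := (lc_leE _ _).1 (partial_sum_le_sum v_pos vt m).
have [n [->|->]] : exists n, k = n.*2 \/ k = n.*2.+1.
  exists k./2; have := odd_double_half k; set m := k./2.
  by case: (odd k) => <-; [right; rewrite add1n | left; rewrite add0n].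
- exists n => //; split; apply/lc_leE.
    by left=> q; rewrite (interleave_partial n q).1 /= subrr.
  apply: nneg_fn_ext (nneg_fnD (us_n n) (vt_n n)) => q.
  by rewrite (interleave_partial n q).1 /=; ring.
- exists n => //; split; apply/lc_leE.
    right; apply: pos_fn_ext (u_pos n) => q.
    by rewrite (interleave_partial n q).2 /=; ring.
  apply: nneg_fn_ext (nneg_fnD (us_n n.+1) (vt_n n)) => q.
  by rewrite (interleave_partial n q).2 /=; ring.
Qed.

Lemma interleave_series : lc_series_to w (lc_add s t).
Proof.
move=> a b a_lt b_gt.
have [N1 uN1] : exists N1, forall n, (N1 <= n)%N -> lc_lt (lc_sub a t) (lc_partial u n).
  by apply: cvg_eventually_gt us _; apply: pos_fn_ext a_lt => q /=; ring.
have [N2 vN2] : exists N2, forall n, (N2 <= n)%N ->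
    lc_lt (lc_sub a (lc_partial u N1)) (lc_partial v n).
  apply: cvg_eventually_gt vt _; apply: pos_fn_ext (uN1 N1 (leqnn _)) => q /=; ring.
exists (N1 + N2).*2.+2 => k Nk; have [n kn [lo hi]] := interleave_partial_bounds k.
have Nn : (N1 + N2 <= n)%N.
  by have := leq_trans Nk kn; rewrite ltnS ltn_double; exact: ltnW.
have u_mono := partial_sum_mono u_pos (leq_trans (leq_addr N2 N1) Nn).
have v_mono := partial_sum_mono v_pos (leq_trans (leq_addl N1 N2) Nn).
split; last by apply: pos_fn_ext (nneg_pos_fnD ((lc_leE _ _).1 hi) b_gt) => q /=; ring.
have := nneg_pos_fnD ((lc_leE _ _).1 lo) (nneg_pos_fnD (nneg_fnD u_mono v_mono)
  (vN2 N2 (leqnn _))).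
by apply: pos_fn_ext => q /=; ring.
Qed.

End Interleaving.

Definition interleave (T : Type) (x y : nat -> T) (j : nat) : T :=
  if odd j then y j./2 else x j./2.

Lemma interleave_even (T : Type) (x y : nat -> T) n : interleave x y n.*2 = x n.
Proof. by rewrite /interleave odd_double half_double. Qed.

Lemma interleave_odd (T : Type) (x y : nat -> T) n : interleave x y n.*2.+1 = y n.
Proof. by rewrite /interleave /= odd_double /= uphalf_double. Qed.

(* Every cover sum is nonnegative: it bounds the empty partial sum. *)
Lemma cover_sum_ge0 (A : set LC) (s : LC) : cover_sums A s -> lc_le lc0 s.
Proof. by move=> [k [a [b [ab [_ abs]]]]]; exact: (partial_sum_le_sum ab abs 0). Qed.

Lemma cover_sums_sub (A B : set LC) : A `<=` B -> cover_sums B `<=` cover_sums A.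
Proof.
by move=> AB s [k [a [b [ab [Bab abs]]]]]; exists k, a, b; split; last split=> // x /AB /Bab.
Qed.

Lemma cover_sums_union (X Y : set LC) (s t : LC) :
  cover_sums X s -> cover_sums Y t -> cover_sums (X `|` Y) (lc_add s t).
Proof.
move=> [k [a [b [ab [Xab abs]]]]] [k' [a' [b' [ab' [Yab' abt]]]]].
exists (interleave k k'), (interleave a a'), (interleave b b'); split; [|split].
- by move=> j; rewrite /interleave; case: (odd j).
- move=> x [/Xab [n xn]|/Yab' [n xn]].
    by exists n.*2; rewrite !interleave_even.
  by exists n.*2.+1; rewrite !interleave_odd.
- apply: interleave_series abs abt => // n.
    by rewrite !interleave_even.
  by rewrite !interleave_odd.
Qed.

Lemma outer_measure_lb_sub (A B : set LC) (m l : LC) : A `<=` B ->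
  is_outer_measure B m -> (forall s, cover_sums A s -> lc_le l s) -> lc_le l m.
Proof. by move=> AB [_ Bglb] Al; apply: Bglb => s /(cover_sums_sub AB); apply: Al. Qed.

Lemma outer_measure_approx (B : set LC) (m e : LC) :
  is_outer_measure B m -> lc_lt m e -> exists t, cover_sums B t /\ lc_lt t e.
Proof.
move=> [_ Bglb] me; apply: contrapT => no_t; apply: lc_lt_leF me (Bglb _ _).
by move=> t Bt; apply: lc_leNlt => te; apply: no_t; exists t.
Qed.

Lemma null_subset (B C : set LC) :
  is_outer_measure B lc0 -> C `<=` B -> is_outer_measure C lc0.
Proof.
move=> B0 CB; split; first by move=> s /cover_sum_ge0.
by move=> l; apply: outer_measure_lb_sub CB B0.
Qed.

Lemma outer_measure_diff_null (A B C : set LC) (mA : LC) :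
  is_outer_measure A mA -> is_outer_measure B lc0 -> C `<=` B ->
  is_outer_measure (A `\` C) mA.
Proof.
move=> AmA B0 CB; split; last by move=> l; apply: outer_measure_lb_sub AmA => x [].
move=> s ACs; apply: lc_leNlt => s_lt.
have [t [Bt t_lt]] : exists t, cover_sums B t /\ lc_lt t (lc_sub mA s).
  by apply: outer_measure_approx B0 _; apply: pos_fn_ext s_lt => q /=; ring.
have A_cover : cover_sums A (lc_add s t).
  apply: cover_sums_sub (cover_sums_union ACs Bt) => x Ax.
  by have [/CB Bx|nCx] := pselect (C x); [right | left].
apply: lc_lt_leF (AmA.1 _ A_cover); apply: pos_fn_ext t_lt => q /=; ring.
Qed.

Theorem proposition3p2 (A B : set LC) (mA : LC) :
  is_outer_measure A mA -> is_outer_measure B lc0 ->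
  forall C : set LC, C `<=` B ->
    (outer_measurable C /\ is_outer_measure C lc0) /\
    (outer_measurable (A `\` C) /\ is_outer_measure (A `\` C) mA).
Proof.
move=> AmA B0 C CB.
have C0 := null_subset B0 CB.
have ACmA := outer_measure_diff_null AmA B0 CB.
by split; split=> //; [exists lc0 | exists mA].
Qed.
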